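(* Let $E_1,\dots,E_N$ be a symmetric sequence of events with correlation functions $G_k$. Then for every $k$ with $2\le k\le N$ and all $r_2,\dots,r_k\in\{0,1\}$, $$G_k(1,r_2,\dots,r_k)=-G_k(0,r_2,\dots,r_k).$$
   Context: $\mathbbm{1}_E$ is the indicator function of an event $E$. A finite sequence of events $E_1,\dots,E_N$ on a common probability space is called symmetric if for all $r_1,\dots,r_N\in\{0,1\}$ and all permutations $\sigma$ of $\{1,\dots,N\}$, $P(\mathbbm{1}_{E_1}=r_1,\dots,\mathbbm{1}_{E_N}=r_N)=P(\mathbbm{1}_{E_1}=r_{\sigma(1)},\dots,\mathbbm{1}_{E_N}=r_{\sigma(N)})$. For $1\le k\le N$ the probability function of order $k$ is $P_k(r_1,\dots,r_k):=\sum_{r_{k+1},\dots,r_N\in\{0,1\}}P(\mathbbm{1}_{E_1}=r_1,\dots,\mathbbm{1}_{E_N}=r_N)$. The correlation functions $G_k:\{0,1\}^k\to\mathbb{R}$ are defined by $G_1:=P_1$ and, recursively for $1<k\le N$, $$G_k(r_1,\dots,r_k):=P_k(r_1,\dots,r_k)-\sum_{\sigma}\sum_{l=1}^{k-1}\frac{1}{(l-1)!\,(k-l)!}G_l(r_1,r_{\sigma(2)},\dots,r_{\sigma(l)})\,P_{k-l}(r_{\sigma(l+1)},\dots,r_{\sigma(k)}),$$ where $\sigma$ runs over all permutations of $\{2,\dots,k\}$. *)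

From HB Require Import structures.
From mathcomp Require Import all_boot all_order all_algebra all_fingroup.
Set Implicit Arguments. Unset Strict Implicit. Unset Printing Implicit Defensive.
Import Order.TTheory GRing.Theory Num.Theory.
Local Open Scope ring_scope.

(* The joint law of the indicators of N events E_1,...,E_N:
   jl x = P(1_{E_1} = x 0, ..., 1_{E_N} = x (N-1)),  x : {0,1}^N  (true = 1). *)
Definition joint_law (R : realFieldType) (N : nat) :=
  {ffun 'I_N -> bool} -> R.

Definition is_prob_law (R : realFieldType) (N : nat) (jl : joint_law R N) :=
  (forall x, 0 <= jl x) /\ \sum_x jl x = 1.

Definition symmetric_law (R : realFieldType) (N : nat) (jl : joint_law R N) :=
  forall (x : {ffun 'I_N -> bool}) (s : 'S_N), jl x = jl [ffun i => x (s i)].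

(* probability function of order k = size r:
   P_k(r_1,...,r_k) = sum over r_{k+1},...,r_N of the joint law *)
Definition Pk (R : realFieldType) (N : nat) (jl : joint_law R N) (r : seq bool) : R :=
  \sum_(x : {ffun 'I_N -> bool} |
          [forall i : 'I_N, (val i < size r)%N ==> (x i == nth false r i)]) jl x.

Definition permute_tail (t : seq bool) (s : 'S_(size t)) : seq bool :=
  [seq nth false t (s i) | i <- enum 'I_(size t)].

(* Auxiliary recursion with fuel m (meaningful when size r <= m):
   G_k(r_1,...,r_k) = P_k(r) - sum_sigma sum_{l=1}^{k-1}
       1/((l-1)!(k-l)!) G_l(r_1, r_sigma(2..l)) P_{k-l}(r_sigma(l+1..k)). *)
Fixpoint Gaux (R : realFieldType) (N : nat) (jl : joint_law R N)
    (m : nat) (r : seq bool) {struct m} : R :=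
  match m with
  | 0 => 0
  | m'.+1 =>
    match r with
    | [::] => 0
    | r1 :: t =>
      Pk jl r -
      \sum_(s : 'S_(size t))
        \sum_(1 <= l < size r)
          ((((l.-1)`! * (size r - l)`!)%N)%:R)^-1 *
          Gaux jl m' (r1 :: take l.-1 (permute_tail s)) *
          Pk jl (drop l.-1 (permute_tail s))
    end
  end.

Definition Gcorr (R : realFieldType) (N : nat) (jl : joint_law R N) (r : seq bool) : R :=
  Gaux jl (size r) r.

(* Summing G_k over its first argument commutes with the recursion, since the
   recursion is linear in the G_l. A symmetric law has permutation-invariant
   P_k, and summing P_k over its first argument gives P_(k-1). By induction on
   k, sum_b G_k(b, t) is 1 for k = 1 and 0 for k >= 2: in the recursion only
   the l = 1 terms survive, each equal to P_(k-1)(t) / (k-1)!, and the (k-1)!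
   permutations cancel them against P_(k-1)(t). *)

From HB Require Import structures.
From mathcomp Require Import all_boot all_order all_algebra all_fingroup.
Import Order.TTheory GRing.Theory Num.Theory.
Local Open Scope ring_scope.
Set Implicit Arguments. Unset Strict Implicit.

Lemma size_permute_tail (t : seq bool) (s : 'S_(size t)) :
  size (permute_tail s) = size t.
Proof. by rewrite /permute_tail size_map size_enum_ord. Qed.

Lemma nth_permute_tail (t : seq bool) (s : 'S_(size t)) (i : 'I_(size t)) :
  nth false (permute_tail s) i = nth false t (s i).
Proof. by rewrite /permute_tail (nth_map i) ?size_enum_ord // nth_ord_enum. Qed.

Lemma permute_tail_rot (b : bool) (t : seq bool) :
  permute_tail (perm (@ordS_inj (size (b :: t)))) = rcons t b.
Proof.
apply: (@eq_from_nth _ false); first by rewrite size_permute_tail size_rcons.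
move=> i; rewrite size_permute_tail => lt_it.
rewrite (nth_permute_tail _ (Ordinal lt_it)) permE nth_rcons /=.
move: lt_it; rewrite ltnS leq_eqVlt => /orP[/eqP-> | lt_it].
  by rewrite modnn ltnn eqxx.
by rewrite modn_small ?ltnS // lt_it.
Qed.

Section WidenPerm.
Variables (n N : nat) (le_nN : (n <= N)%N).

Definition widen_perm_fun (s : 'S_n) (i : 'I_N) : 'I_N :=
  if insub (val i) is Some j then widen_ord le_nN (s j) else i.

Lemma widen_perm_fun_widen (s : 'S_n) (i : 'I_n) :
  widen_perm_fun s (widen_ord le_nN i) = widen_ord le_nN (s i).
Proof. by rewrite /widen_perm_fun valK. Qed.

Lemma widen_perm_funK (s : 'S_n) :
  cancel (widen_perm_fun s) (widen_perm_fun s^-1).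
Proof.
move=> i; rewrite {2}/widen_perm_fun; case: insubP => [j _ vj | ge_in].
  have -> : i = widen_ord le_nN j by apply: val_inj.
  by rewrite widen_perm_fun_widen permK.
by rewrite /widen_perm_fun insubF //; apply: negbTE.
Qed.

Definition widen_perm (s : 'S_n) : 'S_N := perm (can_inj (widen_perm_funK s)).

Lemma widen_permE (s : 'S_n) (i : 'I_n) :
  widen_perm s (widen_ord le_nN i) = widen_ord le_nN (s i).
Proof. by rewrite permE widen_perm_fun_widen. Qed.

End WidenPerm.

Section SymmetricLaw.
Variables (R : realFieldType) (N : nat) (jl : joint_law R N).

Definition has_prefix (x : {ffun 'I_N -> bool}) (r : seq bool) : bool :=
  [forall i : 'I_N, (val i < size r)%N ==> (x i == nth false r i)].

Lemma PkE (r : seq bool) : Pk jl r = \sum_(x | has_prefix x r) jl x.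
Proof. by []. Qed.

Lemma has_prefix_widen (x : {ffun 'I_N -> bool}) (r : seq bool)
    (le_rN : (size r <= N)%N) :
  has_prefix x r = [forall i : 'I_(size r), x (widen_ord le_rN i) == nth false r i].
Proof.
apply/forallP/forallP => [x_r i | x_r i]; first by have := x_r (widen_ord le_rN i); rewrite /= ltn_ord.
apply/implyP => lt_ir; have := x_r (Ordinal lt_ir).
by have -> : widen_ord le_rN (Ordinal lt_ir) = i by apply: val_inj.
Qed.

Lemma has_prefix_rcons (x : {ffun 'I_N -> bool}) (t : seq bool) (b : bool)
    (lt_tN : (size t < N)%N) :
  has_prefix x (rcons t b) = has_prefix x t && (x (Ordinal lt_tN) == b).
Proof.
apply/forallP/andP => [x_tb | [/forallP x_t x_b] i].
  split; last by have := x_tb (Ordinal lt_tN); rewrite /= size_rcons ltnSn nth_rcons ltnn eqxx.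
  apply/forallP => i; apply/implyP => lt_it.
  by have := x_tb i; rewrite size_rcons nth_rcons lt_it ltnS ltnW.
apply/implyP; rewrite size_rcons ltnS leq_eqVlt nth_rcons => /orP[/eqP i_t | lt_it].
  have -> : i = Ordinal lt_tN by apply: val_inj.
  by rewrite /= ltnn eqxx.
by rewrite lt_it; have /implyP := x_t i; apply.
Qed.

Lemma Pk_nil : is_prob_law jl -> Pk jl [::] = 1.
Proof. by case=> _ <-; apply: eq_bigl => x; apply/forallP. Qed.

Lemma Pk_rcons (t : seq bool) : (size t < N)%N ->
  Pk jl (rcons t true) + Pk jl (rcons t false) = Pk jl t.
Proof.
move=> lt_tN; rewrite [Pk jl t]PkE (bigID (fun x : {ffun _} => x (Ordinal lt_tN))) /=.
by congr (_ + _); rewrite PkE; apply: eq_bigl => x; rewrite (has_prefix_rcons _ _ lt_tN) ?eqb_id ?eqbF_neg.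
Qed.

Hypothesis jl_sym : symmetric_law jl.

Lemma sum_law_perm (s : 'S_N) (P : pred {ffun 'I_N -> bool}) :
  \sum_(x | P x) jl x = \sum_(x : {ffun 'I_N -> bool} | P [ffun i => x (s i)]) jl x.
Proof.
rewrite (reindex (fun x : {ffun 'I_N -> bool} => [ffun i => x (s i)])) /=.
  by apply: eq_bigr => x _; rewrite -jl_sym.
exists (fun x : {ffun 'I_N -> bool} => [ffun i => x (s^-1 i)%g]) => x _;
  by apply/ffunP => i; rewrite !ffunE ?permK ?permKV.
Qed.

Lemma has_prefix_permute_tail (x : {ffun 'I_N -> bool}) (t : seq bool)
    (s : 'S_(size t)) (le_tN : (size t <= N)%N) :
  has_prefix [ffun i => x (widen_perm le_tN s i)] (permute_tail s) = has_prefix x t.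
Proof.
rewrite (has_prefix_widen _ le_tN); apply/forallP/forallP => x_t i.
  have := x_t (widen_ord le_tN (s^-1 i)%g).
  rewrite ffunE widen_permE permKV size_permute_tail /= ltn_ord.
  by rewrite (nth_permute_tail s (s^-1 i)%g) permKV.
apply/implyP; rewrite size_permute_tail => lt_it.
have -> : i = widen_ord le_tN (Ordinal lt_it) by apply: val_inj.
by rewrite ffunE widen_permE (nth_permute_tail s (Ordinal lt_it)).
Qed.

Lemma Pk_permute_tail (t : seq bool) (s : 'S_(size t)) :
  (size t <= N)%N -> Pk jl (permute_tail s) = Pk jl t.
Proof.
move=> le_tN; rewrite PkE (sum_law_perm (widen_perm le_tN s)).
by apply: eq_bigl => x; rewrite has_prefix_permute_tail.
Qed.

Lemma Pk_cons (t : seq bool) : (size t < N)%N ->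
  Pk jl (true :: t) + Pk jl (false :: t) = Pk jl t.
Proof.
move=> lt_tN; rewrite -(Pk_permute_tail (perm (@ordS_inj (size (true :: t))))) //.
by rewrite -(Pk_permute_tail (perm (@ordS_inj (size (false :: t))))) // !permute_tail_rot Pk_rcons.
Qed.

Definition Gaux_marg (m : nat) (t : seq bool) : R :=
  Gaux jl m (true :: t) + Gaux jl m (false :: t).

Lemma Gaux_marg_step (m : nat) (t : seq bool) : (size t < N)%N ->
  Gaux_marg m.+1 t =
  Pk jl t - \sum_(s : 'S_(size t)) \sum_(1 <= l < (size t).+1)
    ((((l.-1)`! * ((size t).+1 - l)`!)%N)%:R)^-1 *
    Gaux_marg m (take l.-1 (permute_tail s)) * Pk jl (drop l.-1 (permute_tail s)).
Proof.
move=> lt_tN; rewrite /Gaux_marg /= addrACA -opprD -big_split Pk_cons //.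
congr (_ - _); apply: eq_bigr => s _; rewrite -big_split.
by apply: eq_bigr => l _; rewrite mulrDr mulrDl.
Qed.

Lemma sum_Gaux_marg_Pk (m : nat) (t : seq bool) (s : 'S_(size t)) :
  (forall v, (size v < size t)%N -> Gaux_marg m v = (v == [::])%:R) ->
  (0 < size t <= N)%N ->
  \sum_(1 <= l < (size t).+1)
    ((((l.-1)`! * ((size t).+1 - l)`!)%N)%:R)^-1 *
    Gaux_marg m (take l.-1 (permute_tail s)) * Pk jl (drop l.-1 (permute_tail s))
  = ((size t)`!%:R)^-1 * Pk jl t.
Proof.
move=> marg_t /andP[t_gt0 le_tN].
rewrite big_ltn // take0 drop0 marg_t // (Pk_permute_tail s le_tN).
rewrite eqxx mulr1 subn1 mul1n big_nat_cond big1 ?addr0 // => l.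
move=> /andP[/andP[lt1l lt_lt] _]; have l_gt0 : (0 < l)%N := ltnW lt1l.
have size_take_l : size (take l.-1 (permute_tail s)) = l.-1.
  by rewrite size_takel // size_permute_tail -ltnS prednK // ltnW.
rewrite marg_t ?size_take_l ?prednK // -size_eq0 size_take_l.
have -> : (l.-1 == 0)%N = false by case: l lt1l {lt_lt size_take_l l_gt0} => [|[|l]].
by rewrite mulr0 mul0r.
Qed.

Hypothesis jl_prob : is_prob_law jl.

Lemma Gaux_margE (m : nat) (t : seq bool) :
  (size t < m)%N -> (size t < N)%N -> Gaux_marg m t = (t == [::])%:R.
Proof.
elim: m t => [|m IHm] t // lt_tm lt_tN; rewrite Gaux_marg_step //.
case: t lt_tm lt_tN => [|b t] lt_tm lt_tN.
  by rewrite big1 ?subr0 ?(Pk_nil jl_prob) // => s _; rewrite big_geq.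
have marg_bt v : (size v < size (b :: t))%N -> Gaux_marg m v = (v == [::])%:R.
  move=> lt_vbt; apply: IHm; first exact: leq_trans lt_vbt lt_tm.
  exact: ltn_trans lt_vbt lt_tN.
rewrite (eq_bigr _ (fun s _ => sum_Gaux_marg_Pk s marg_bt (ltnW lt_tN))).
rewrite sumr_const card_Sn -mulrnAl -mulr_natr mulVf ?mul1r ?subrr //.
by rewrite pnatr_eq0 -lt0n fact_gt0.
Qed.

End SymmetricLaw.

Theorem mainTheorem4 (R : realFieldType) (N : nat) (jl : joint_law R N)
    (Hprob : is_prob_law jl) (Hsym : symmetric_law jl)
    (t : seq bool) (Ht1 : (1 <= size t)%N) (HtN : (size t < N)%N) :
  Gcorr jl (true :: t) = - Gcorr jl (false :: t).
Proof.
apply/eqP; rewrite -addr_eq0; have := Gaux_margE Hsym Hprob (ltnSn _) HtN.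
by rewrite /Gaux_marg => ->; case: t Ht1 {HtN}.
Qed.
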